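(* For an arbitrary fixed order, if $OPT(I)=1$ then $FF(I)=1$, and if $OPT(I)=2$ then $FF(I)\le 3$. Hence first-fit is a $3/2$-approximation on instances with $OPT(I)\le 2$.
   Context: Fixed order scheduling with deadlines: there are jobs $J=\{1,\dots,n\}$, each job $j$ having a processing time $p_j\in\mathbb{N}$, $p_j>0$, and a deadline $d_j\in\mathbb{N}$ with $d_j\ge p_j$ (no other assumption relating order, deadlines, or processing times). All jobs are released at time $0$; job $j$ precedes job $k$ in the fixed order iff $j<k$. A schedule $\tau:J\to\{1,\dots,n\}$ assigns jobs to identical machines; each machine processes its jobs in the fixed order from time $0$ without idle time or preemption, so job $j$ completes at $\sum_{k\le j,\tau(k)=\tau(j)}p_k$; it is feasible if every job completes by its deadline. $OPT(I)$ is the minimum number of machines used by a feasible schedule. First-fit (FF): machines indexed $1,2,\dots$; process jobs in the fixed order and assign each job $j$ to the smallest-index machine whose current load (sum of processing times already assigned) plus $p_j$ is at most $d_j$; $FF(I)$ is the number of nonempty machines. *)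

From mathcomp Require Import all_boot.
Set Implicit Arguments. Unset Strict Implicit. Unset Printing Implicit Defensive.

(* A job is a pair (p, d): processing time p and deadline d.
   An instance is the sequence of jobs in the fixed order
   (job at position 0 is job 1, etc.). *)
Definition job := (nat * nat)%type.
Definition ptime (j : job) : nat := j.1.
Definition dline (j : job) : nat := j.2.

Definition valid_instance (I : seq job) : bool :=
  all (fun j => (0 < ptime j) && (ptime j <= dline j)) I.

Definition jobt (I : seq job) := 'I_(size I).
Definition jb (I : seq job) (k : nat) : job := nth (0, 0) I k.

Definition schedule (I : seq job) := 'I_(size I) -> 'I_(size I).

Definition completion (I : seq job) (tau : schedule I) (j : 'I_(size I)) : nat :=
  \sum_(k < size I | (k <= j) && (tau k == tau j)) ptime (jb I k).

Definition feasible (I : seq job) (tau : schedule I) : Prop :=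
  forall j : 'I_(size I), completion tau j <= dline (jb I j).

Definition machines_used (I : seq job) (tau : schedule I) : nat :=
  #|[set tau j | j : 'I_(size I)]|.

Definition is_OPT (I : seq job) (k : nat) : Prop :=
  (exists tau : schedule I, feasible tau /\ machines_used tau = k) /\
  (forall tau : schedule I, feasible tau -> k <= machines_used tau).

(* First-fit: machine loads as a sequence (machine i has load nth 0 loads i).
   A job goes to the smallest-index machine whose load + p <= d; if none of
   the currently nonempty machines fits, it opens a new machine (an empty
   machine always fits since p <= d). *)
Definition ff_step (loads : seq nat) (j : job) : seq nat :=
  let i := find (fun l => l + ptime j <= dline j) loads in
  if i < size loads then set_nth 0 loads i (nth 0 loads i + ptime j)
  else rcons loads (ptime j).

Definition FF (I : seq job) : nat := size (foldl ff_step [::] I).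

(* First-fit tracks an optimal schedule job by job.  With one optimal machine,
   FF's first machine always carries exactly the optimal load, so every job fits
   there.  With two optimal machines of current loads A and B, FF keeps on its
   first three machines a total load of A + B, and for each of A and B one of
   its machines 1, 2 has load at most that value; hence the next job, which fits
   on top of A or of B, always fits on one of FF's first three machines.  When
   machine 0 rejects the job, its load exceeds the optimal machine's, which
   pushes the loads of machines 1 and 2 below the other optimal load. *)

From mathcomp Require Import all_boot zify.
Set Implicit Arguments. Unset Strict Implicit. Unset Printing Implicit Defensive.

Lemma big_ord_ltS (R : Type) (idx : R) (op : Monoid.com_law idx) n
    (F : 'I_n -> R) (K : 'I_n) :
  \big[op/idx]_(i < n | i < K.+1) F i = op (\big[op/idx]_(i < n | i < K) F i) (F K).
Proof.
rewrite (bigD1 K) //= Monoid.mulmC; congr (op _ _); apply: eq_bigl => i.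
by rewrite ltnS ltn_neqAle andbC.
Qed.

Definition fits (j : job) (load : nat) : bool := load + ptime j <= dline j.

Definition ff_slot (loads : seq nat) (j : job) : nat := find (fits j) loads.

Lemma ff_slot_le loads j i : fits j (nth 0 loads i) -> ff_slot loads j <= i.
Proof.
move=> fit_i; rewrite leqNgt; apply/negP => /(before_find 0).
by rewrite fit_i.
Qed.

Lemma ff_slot_rejects loads j i :
  i < ff_slot loads j -> dline j < nth 0 loads i + ptime j.
Proof. by move/(before_find 0); rewrite /fits ltnNge => ->. Qed.

Lemma size_ff_step loads j :
  size (ff_step loads j) = maxn (size loads) (ff_slot loads j).+1.
Proof.
have := find_size (fits j) loads; rewrite /ff_step -/(fits j) -/(ff_slot loads j).
case: ltnP => [lt_slot _ | ge_slot le_slot]; first by rewrite size_set_nth maxnC.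
by rewrite size_rcons; lia.
Qed.

Lemma nth_ff_step loads j i :
  nth 0 (ff_step loads j) i =
  nth 0 loads i + (if i == ff_slot loads j then ptime j else 0).
Proof.
have := find_size (fits j) loads; rewrite /ff_step -/(fits j) -/(ff_slot loads j).
case: ltnP => [lt_slot _ | ge_slot le_slot].
  by rewrite nth_set_nth /=; case: eqP => [->|_]; rewrite ?addn0.
have -> : ff_slot loads j = size loads by lia.
rewrite nth_rcons; case: ltngtP => [lt_i | gt_i | ->]; rewrite ?addn0 //.
  by rewrite nth_default //; lia.
by rewrite nth_default.
Qed.

Lemma ff_take_step (I : seq job) k (lt_k : k < size I) :
  foldl ff_step [::] (take k.+1 I) =
  ff_step (foldl ff_step [::] (take k I)) (jb I (Ordinal lt_k)).
Proof. by rewrite (take_nth (0, 0) lt_k) foldl_rcons. Qed.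

Definition two_machine_inv (loads : seq nat) (A B : nat) : Prop :=
  let L := nth 0 loads in
  [/\ size loads <= 3, L 0 + L 1 + L 2 = A + B,
      L 1 <= A \/ L 2 <= A & L 1 <= B \/ L 2 <= B].

Lemma two_machine_inv_sym loads A B :
  two_machine_inv loads A B -> two_machine_inv loads B A.
Proof. by case=> *; split=> //; lia. Qed.

Lemma two_machine_inv_step loads A B j : two_machine_inv loads A B -> fits j A ->
  two_machine_inv (ff_step loads j) (A + ptime j) B.
Proof.
rewrite /fits => -[size_le3 sum onA onB] fitA.
have slot_le2 : ff_slot loads j <= 2.
  case: onA => le; last by apply: ff_slot_le; rewrite /fits; lia.
  by apply: (@leq_trans 1); first apply: ff_slot_le; rewrite /fits; lia.
have rej0 := @ff_slot_rejects loads j 0; have rej1 := @ff_slot_rejects loads j 1.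
rewrite /two_machine_inv size_ff_step !nth_ff_step.
move: slot_le2 rej0 rej1; case: (ff_slot loads j) => [|[|[|s]]] //= *; split; lia.
Qed.

Section ScheduleLoads.

Variables (I : seq job) (tau : schedule I).

Definition prefix_load (k : nat) (m : 'I_(size I)) : nat :=
  \sum_(i < size I | i < k) (if tau i == m then ptime (jb I i) else 0).

Lemma prefix_load0 m : prefix_load 0 m = 0.
Proof. by rewrite /prefix_load big_pred0. Qed.

Lemma prefix_loadS (K : 'I_(size I)) m :
  prefix_load K.+1 m = prefix_load K m + (if tau K == m then ptime (jb I K) else 0).
Proof. exact: big_ord_ltS. Qed.

Lemma completion_prefix_load j :
  completion tau j = prefix_load j (tau j) + ptime (jb I j).
Proof.
rewrite /completion big_mkcondr /=.
under eq_bigl => i do rewrite -ltnS.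
by rewrite big_ord_ltS eqxx.
Qed.

Lemma feasible_fits :
  feasible tau -> forall j : 'I_(size I), fits (jb I j) (prefix_load j (tau j)).
Proof. by move=> feas j; rewrite /fits -completion_prefix_load. Qed.

Lemma machines_used_eq0 : machines_used tau = 0 -> size I = 0.
Proof.
rewrite /machines_used => /cards0_eq empty; case: (posnP (size I)) => // pos.
have : tau (Ordinal pos) \in [set tau j | j : 'I_(size I)].
  by apply/imsetP; exists (Ordinal pos).
by rewrite empty in_set0.
Qed.

Lemma machines_used_eq1 :
  machines_used tau = 1 -> exists m, forall j, tau j = m.
Proof.
move/eqP/cards1P => [m used]; exists m => j.
by apply/set1P; rewrite -used imset_f.
Qed.

Lemma machines_used_eq2 : machines_used tau = 2 ->
  exists m1 m2, m1 != m2 /\ forall j, tau j = m1 \/ tau j = m2.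
Proof.
move/eqP/cards2P => [m1 [m2 [neq used]]]; exists m1, m2; split=> // j.
by apply/set2P; rewrite -used imset_f.
Qed.

Hypothesis feas : feasible tau.

Lemma ff_loads_one_machine m : (forall j, tau j = m) ->
  forall k, k <= size I ->
  foldl ff_step [::] (take k I) = nseq (0 < k) (prefix_load k m).
Proof.
move=> one; elim=> [|k IH] le_k; first by rewrite take0.
have lt_k : k < size I by [].
set K := Ordinal lt_k.
have fit := feasible_fits feas K; rewrite one in fit.
have load_step : prefix_load k.+1 m = prefix_load k m + _ := prefix_loadS K m.
rewrite ff_take_step IH ?(ltnW le_k) // load_step one eqxx.
move: (jb I K) fit => j /= fit; case: {IH le_k lt_k K load_step} k fit => [|k] fit.
  by rewrite prefix_load0.
by rewrite /ff_step /=; move: fit; rewrite /fits => ->.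
Qed.

Lemma ff_loads_two_machines m1 m2 :
  m1 != m2 -> (forall j, tau j = m1 \/ tau j = m2) ->
  forall k, k <= size I ->
  two_machine_inv (foldl ff_step [::] (take k I)) (prefix_load k m1) (prefix_load k m2).
Proof.
move=> neq two; elim=> [|k IH] le_k.
  by rewrite take0 !prefix_load0; split=> //; left.
have lt_k : k < size I by [].
set K := Ordinal lt_k.
have fit := feasible_fits feas K.
have step1 : prefix_load k.+1 m1 = prefix_load k m1 + _ := prefix_loadS K m1.
have step2 : prefix_load k.+1 m2 = prefix_load k m2 + _ := prefix_loadS K m2.
have {}IH := IH (ltnW le_k).
rewrite ff_take_step step1 step2.
case: (two K) => -> in fit *; rewrite eqxx ?(ifN_eq _ _ neq) ?(ifN_eqC _ _ neq) addn0.
  exact: two_machine_inv_step.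
by apply/two_machine_inv_sym/two_machine_inv_step => //; apply: two_machine_inv_sym.
Qed.

End ScheduleLoads.

Lemma FF_OPT0 I : is_OPT I 0 -> FF I = 0.
Proof. by case=> [[tau [_ /machines_used_eq0 /size0nil ->]] _]. Qed.

Lemma FF_OPT1 I : is_OPT I 1 -> FF I = 1.
Proof.
case=> [[tau [feas /machines_used_eq1 [m one]]] _].
have pos : 0 < size I by apply: leq_ltn_trans (ltn_ord m).
by rewrite /FF -{1}(take_size I) (ff_loads_one_machine feas one) // size_nseq pos.
Qed.

Lemma FF_OPT2 I : is_OPT I 2 -> FF I <= 3.
Proof.
case=> [[tau [feas /machines_used_eq2 [m1 [m2 [neq two]]]]] _].
by have [] := ff_loads_two_machines feas neq two (leqnn (size I)); rewrite take_size.
Qed.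

Theorem mainTheorem8 (I : seq job) :
  valid_instance I ->
  (is_OPT I 1 -> FF I = 1) /\
  (is_OPT I 2 -> FF I <= 3) /\
  (forall k, k <= 2 -> is_OPT I k -> 2 * FF I <= 3 * k).
Proof.
move=> _; split; first exact: FF_OPT1.
split; first exact: FF_OPT2.
case=> [|[|[|k]]] // _ opt.
- by rewrite (FF_OPT0 opt).
- by rewrite (FF_OPT1 opt).
- by have := FF_OPT2 opt; lia.
Qed.
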